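(* Let $n,k$ be positive integers such that $s^{n,k}=\frac{n(n+1)}{2k}$ is an integer, let $l<k$, and let $p_1\le p_2\le\cdots\le p_l$ be positive integers (an incomplete ascending partition $P=[p_1,\ldots,p_l]$) satisfying: (i) $n-\sum_{i=1}^l p_i\ge (k-l)p_l$; and (ii) $\mathrm{slack}_j(P)=\sum_{i=1}^{p_1+\cdots+p_j}(n-i+1)-j\,s^{n,k}\ge 0$ for all $j\le l$. Then there exist integers $p_{l+1},\ldots,p_k$ such that $\mathcal P=[p_1,\ldots,p_k]\in AP_{n,k}$ and $\mathrm{slack}(\mathcal P)\ge 0$.
   Context: An ascending partition of $n$ of size $k$ is a sequence of positive integers $[p_1,\ldots,p_k]$ with $p_1\le\cdots\le p_k$ and $\sum_i p_i=n$; $AP_{n,k}$ is the set of all such partitions when $s^{n,k}$ is an integer. For $\mathcal P\in AP_{n,k}$ and $j=1,\ldots,k$, $\mathrm{slack}_j(\mathcal P)=\sum_{i=1}^{p_1+\cdots+p_j}(n-i+1)-j\,s^{n,k}$, and $\mathrm{slack}(\mathcal P)=\min_{1\le j\le k-1}\mathrm{slack}_j(\mathcal P)$. *)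

From mathcomp Require Import all_boot all_order all_algebra.
Set Implicit Arguments. Unset Strict Implicit. Unset Printing Implicit Defensive.
Import Order.TTheory GRing.Theory Num.Theory.

(* s^{n,k} = n(n+1)/(2k); used only when 2k divides n(n+1). *)
Definition snk (n k : nat) : nat := (n * (n + 1)) %/ (2 * k).

Definition is_asc_partition (n k : nat) (P : seq nat) : bool :=
  [&& size P == k, all (fun p => 0 < p) P, sorted leq P & sumn P == n].

Definition slack_j (n k : nat) (P : seq nat) (j : nat) : int :=
  ((\sum_(1 <= i < (sumn (take j P)).+1) ((n%:Z - i%:Z + 1)))
   - (j * snk n k)%:Z)%R.

Definition slack_nonneg (n k : nat) (P : seq nat) : Prop :=
  forall j, 1 <= j <= k.-1 -> (0 <= slack_j n k P j)%R.

From mathcomp Require Import all_boot all_order all_algebra zify.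
Import Order.TTheory GRing.Theory Num.Theory.

(* Since 2 k s = n (n + 1), slack_j equals (k - j) s - y (y + 1) / 2, where y
   is the sum of the parts after the j-th one.  Complete P by the balanced
   partition of m = n - sum P into r = k - l parts of sizes floor(m / r) and
   ceil(m / r); hypothesis (i) says floor(m / r) >= p_l, so the result is
   ascending.  Slack_l >= 0 reads m (m + 1) <= 2 r s, and the largest w parts
   of the balanced partition sum to some y with r y (y + 1) <= w m (m + 1), so
   y (y + 1) <= 2 w s, which is slack_(k - w) >= 0. *)

Lemma balanced_tail_ineq (q e r w : nat) : 0 < q -> e < r -> w <= r ->
  r * ((w * q + minn w e) * (w * q + minn w e).+1)
    <= w * ((r * q + e) * (r * q + e).+1).
Proof.
move=> q_gt0 lt_er le_wr.
case: (leqP w e) => [le_we | lt_ew].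
- (* with m = r q + e and y = w (q + 1), w m (m + 1) - r y (y + 1) is w times
     r (q + 1)^2 (e - w) + (r - e) (r q^2 - e - 1) *)
  have le_e1_rqq : (e + 1) * 1 <= r * (q * q) by apply: leq_mul; nia.
  have : (r - e) * ((e + 1) * 1) <= (r - e) * (r * (q * q)) by apply: leq_mul.
  have : r * (q + 1) * (q + 1) * w <= r * (q + 1) * (q + 1) * e by apply: leq_mul.
  nia.
- (* with y = w q + e, w m (m + 1) - r y (y + 1) = (r - w) (r w q^2 - e (e + 1)) *)
  have le_ee_rwqq : e * e.+1 <= r * w * (q * q).
    by rewrite -(muln1 (e * _)); apply: leq_mul; [apply: leq_mul|]; nia.
  have : (r - w) * (e * e.+1) <= (r - w) * (r * w * (q * q)) by apply: leq_mul.
  nia.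
Qed.

Lemma path_nseq_leq (x y a : nat) : x <= y -> path leq x (nseq a y).
Proof. by elim: a x => [|a IHa] x //= ->; apply: IHa. Qed.

Definition balanced (m r : nat) : seq nat :=
  nseq (r - m %% r) (m %/ r) ++ nseq (m %% r) (m %/ r).+1.

Lemma path_balanced (x m r : nat) : x <= m %/ r -> path leq x (balanced m r).
Proof.
rewrite /balanced; elim: (r - m %% r) x => [|a IHa] x le_xq /=.
  exact/path_nseq_leq/leqW.
by rewrite le_xq IHa.
Qed.

Section Balanced.
Variables m r : nat.
Hypothesis r_gt0 : 0 < r.

Lemma size_balanced : size (balanced m r) = r.
Proof. by have := ltn_pmod m r_gt0; rewrite size_cat !size_nseq; lia. Qed.

Lemma sumn_balanced : sumn (balanced m r) = m.
Proof.
by have := ltn_pmod m r_gt0; rewrite [RHS](divn_eq m r) sumn_cat !sumn_nseq; nia.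
Qed.

Lemma all_balanced_gt0 : r <= m -> all (fun p => 0 < p) (balanced m r).
Proof. by rewrite -(divn_gt0 m r_gt0) all_cat !all_nseq => ->; rewrite !orbT. Qed.

Lemma sumn_drop_balanced t : t <= r ->
  sumn (drop t (balanced m r)) = (r - t) * (m %/ r) + minn (r - t) (m %% r).
Proof.
move=> le_tr; have lt_er := ltn_pmod m r_gt0.
rewrite drop_cat size_nseq.
by case: (ltnP t (r - m %% r)) => [lt_t | le_t];
  rewrite ?drop_nseq ?sumn_cat !sumn_nseq; nia.
Qed.

Lemma balanced_tail_bound t : r <= m -> t <= r ->
  let y := sumn (drop t (balanced m r)) in r * (y * y.+1) <= (r - t) * (m * m.+1).
Proof.
move=> le_rm le_tr /=; rewrite sumn_drop_balanced //.
have q_gt0 : 0 < m %/ r by rewrite divn_gt0.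
have := balanced_tail_ineq _ _ _ _ q_gt0 (ltn_pmod m r_gt0) (leq_subr t r).
by rewrite [r * (m %/ r)]mulnC -divn_eq.
Qed.

End Balanced.

Local Open Scope ring_scope.

Lemma sum_downfrom (n S : nat) :
  2 * \sum_(1 <= i < S.+1) (n%:Z - i%:Z + 1) = S%:Z * (2 * n%:Z - S%:Z + 1).
Proof.
elim: S => [|S IHS]; first by rewrite big_geq.
by rewrite big_nat_recr //= mulrDr IHS; lia.
Qed.

Lemma slack_j_drop (n k j : nat) (R : seq nat) :
  (2 * k %| n * (n + 1))%N -> sumn R = n -> (j <= k)%N ->
  2 * slack_j n k R j =
    (2 * (k - j) * snk n k)%:Z - (sumn (drop j R) * (sumn (drop j R)).+1)%:Z.
Proof.
move=> dvd_n sumR le_jk; rewrite /slack_j mulrBr sum_downfrom.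
have ks_eq : (2 * k * snk n k = n * (n + 1))%N by rewrite /snk mulnC divnK.
have := congr1 sumn (cat_take_drop j R); rewrite sumn_cat sumR.
set S := sumn (take j R); set y := sumn (drop j R); move: (snk n k) ks_eq => s.
nia.
Qed.

Lemma slack_j_ge0 (n k j : nat) (R : seq nat) :
  (2 * k %| n * (n + 1))%N -> sumn R = n -> (j <= k)%N ->
  (0 <= slack_j n k R j) =
    (sumn (drop j R) * (sumn (drop j R)).+1 <= 2 * (k - j) * snk n k)%N.
Proof.
move=> dvd_n sumR le_jk.
have two_gt0 : 0 < 2 :> int by [].
by rewrite -(pmulr_rge0 _ two_gt0) slack_j_drop // subr_ge0 lez_nat.
Qed.

Local Close Scope ring_scope.

Lemma asc_partition_cat_balanced (P : seq nat) (m r : nat) :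
  0 < r -> r <= m -> r * last 0 P <= m ->
  all (fun p => 0 < p) P -> sorted leq P ->
  is_asc_partition (sumn P + m) (size P + r) (P ++ balanced m r).
Proof.
move=> r_gt0 le_rm le_last_m posP sortP.
have path0P : path leq 0 P by case: P sortP {le_last_m posP}.
have le_last_q : last 0 P <= m %/ r by rewrite leq_divRL // mulnC.
apply/and4P; split.
- by rewrite size_cat size_balanced.
- by rewrite all_cat posP all_balanced_gt0.
- by apply: (path_sorted (x := 0)); rewrite cat_path path0P path_balanced.
- by rewrite sumn_cat sumn_balanced.
Qed.

Lemma slack_j_cat_balanced_ge0 (n k m r j : nat) (P : seq nat) :
  (2 * k %| n * (n + 1))%N -> sumn P + m = n -> size P + r = k ->
  0 < r -> r <= m ->
  (0 <= slack_j n k (P ++ balanced m r) (size P))%R ->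
  size P <= j <= k -> (0 <= slack_j n k (P ++ balanced m r) j)%R.
Proof.
move=> dvd_n sumP sizeP r_gt0 le_rm slack_l /andP[le_lj le_jk]; subst k.
have sumPQ : sumn (P ++ balanced m r) = n by rewrite sumn_cat sumn_balanced.
move: slack_l; rewrite (slack_j_ge0 _ _ _ _ dvd_n sumPQ (leq_addr r _)).
rewrite drop_size_cat // sumn_balanced // addKn => slack_l.
rewrite (slack_j_ge0 _ _ _ _ dvd_n sumPQ le_jk).
rewrite -(subnKC le_lj) subnDA addKn addnC -drop_drop drop_size_cat //.
have le_tr : j - size P <= r by rewrite leq_subLR.
have := balanced_tail_bound _ _ r_gt0 _ le_rm le_tr => /= tail_Q.
rewrite -(leq_pmul2l r_gt0); apply: (leq_trans tail_Q).
set s := snk _ _; set w := r - _.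
have -> : r * (2 * w * s) = w * (2 * r * s) by rewrite mulnCA !mulnA (mulnC 2).
exact: leq_mul.
Qed.

Theorem mainTheorem5 (n k l : nat) (P : seq nat) :
  0 < n -> 0 < k ->
  (2 * k %| n * (n + 1))%N ->
  0 < l -> l < k ->
  size P = l ->
  all (fun p => 0 < p) P ->
  sorted leq P ->
  (((k - l) * last 0 P)%:Z <= n%:Z - (sumn P)%:Z)%R ->
  (forall j, 1 <= j <= l -> (0 <= slack_j n k P j)%R) ->
  exists Q : seq nat,
    is_asc_partition n k (P ++ Q) /\ slack_nonneg n k (P ++ Q).
Proof.
move=> _ _ dvd_n l_gt0 lt_lk sizeP posP sortP room slackP.
set r := k - l; set m := n - sumn P.
have r_gt0 : 0 < r by rewrite subn_gt0.
have le_rlast_m : r * last 0 P <= m by move: room; rewrite /r /m; move: (_ * _) => a; lia.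
have last_gt0 : 0 < last 0 P.
  by rewrite -nth_last; apply/(allP posP)/mem_nth; rewrite sizeP prednK.
have le_rm : r <= m by apply: leq_trans le_rlast_m; rewrite leq_pmulr.
have sumPm : sumn P + m = n by rewrite /m; lia.
have sizePr : size P + r = k by rewrite sizeP /r; lia.
have slackPQ j : 0 < j <= l -> (0 <= slack_j n k (P ++ balanced m r) j)%R.
  by case/andP=> j_gt0 le_jl; rewrite /slack_j takel_cat ?sizeP // slackP ?j_gt0.
exists (balanced m r); split.
  by rewrite -{1}sumPm -{1}sizePr asc_partition_cat_balanced.
move=> j /andP[j_gt0 le_jk]; case: (leqP j l) => [le_jl | lt_lj].
  by rewrite slackPQ ?j_gt0.
apply: slack_j_cat_balanced_ge0 => //; first by rewrite sizeP slackPQ ?l_gt0 ?leqnn.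
rewrite sizeP (ltnW lt_lj); lia.
Qed.
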